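(* Let $r\ge1$, $n\ge1$ and $k\ge1$ be integers, and let $\mathcal P(n,r,1)$ be the set of lattice paths with steps $U=(1,1)$ and $D=(1,-r)$ from $(0,0)$ to $((r+1)n+1,1)$ (so with $rn+1$ up steps and $n$ down steps). Then (whenever the denominators are nonzero): (1) The number of paths in $\mathcal P(n,r,1)$ with $k-1$ peaks that start with a down step and end with an up step and have exactly $j$ peaks on or below the $x$-axis is $\frac1k\binom{rn}{k-1}\binom{n-1}{k-1}$, for each $j=0,1,\dots,k-1$. (2) The number of paths in $\mathcal P(n,r,1)$ with $k-1$ valleys that start with an up step and end with a down step and have exactly $j$ valleys on or below the $x$-axis is $\frac1k\binom{rn}{k-1}\binom{n-1}{k-1}$, for each $j=0,1,\dots,k-1$. (3) The number of paths in $\mathcal P(n,r,1)$ with $rn-k$ double rises that start with an up step and end with an up step and have exactly $j$ double rises on or below the $x$-axis is $\frac{1}{rn-k+1}\binom{rn}{k}\binom{n-1}{k-1}$, for each $j=0,1,\dots,rn-k$. (4) The number of paths in $\mathcal P(n,r,1)$ with $n-k-1$ double falls that start with a down step and end with a down step and have exactly $j$ double falls on or below the $x$-axis is $\frac{1}{n-k}\binom{rn}{k-1}\binom{n-1}{k}$, for each $j=0,1,\dots,n-k-1$. (5) The number of paths in $\mathcal P(n,r,1)$ with $k$ peaks that start with an up step and have exactly $j$ up steps starting on or below the $x$-axis is $\frac{1}{rn+1}\binom{rn+1}{k}\binom{n-1}{k-1}$, for each $j=1,2,\dots,rn+1$. (6) The number of paths in $\mathcal P(n,r,1)$ with $k$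 valleys that start with a down step and have exactly $j$ down steps starting on or below the $x$-axis is $\frac1n\binom{rn}{k-1}\binom{n}{k}$, for each $j=1,2,\dots,n$.
   Context: Writing a path as a word in $U,D$: a peak is an occurrence of two consecutive steps $UD$, a valley an occurrence of $DU$, a double rise an occurrence of $UU$, a double fall an occurrence of $DD$; such an occurrence lies on or below the $x$-axis if the vertex between its two steps has $y$-coordinate $\le0$. A step starts on or below the $x$-axis if its initial vertex has $y$-coordinate $\le0$. *)

From mathcomp Require Import all_boot all_order all_algebra.
Set Implicit Arguments. Unset Strict Implicit. Unset Printing Implicit Defensive.
Import Order.TTheory GRing.Theory Num.Theory.

(* A path is a word over {U,D}, encoded as seq bool: true = U = (1,1),
   false = D = (1,-r). *)

Definition ht (r : nat) (s : seq bool) (i : nat) : int :=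
  (count id (take i s))%:Z - (r * count negb (take i s))%:Z.

Definition in_P (r n : nat) (s : seq bool) : bool :=
  [&& size s == (r.+1 * n).+1, count id s == (r * n).+1 & count negb s == n].

Definition occ (a b : bool) (s : seq bool) : nat :=
  count (fun i => (nth false s i == a) && (nth false s i.+1 == b))
        (iota 0 (size s).-1).

Definition occ_low (r : nat) (a b : bool) (s : seq bool) : nat :=
  count (fun i => [&& nth false s i == a, nth false s i.+1 == b
                    & (ht r s i.+1 <= 0)%R])
        (iota 0 (size s).-1).

Definition steps_low (r : nat) (a : bool) (s : seq bool) : nat :=
  count (fun i => (nth false s i == a) && (ht r s i <= 0)%R) (iota 0 (size s)).

Definition first_step (s : seq bool) : bool := nth false s 0.
Definition last_step (s : seq bool) : bool := nth false s (size s).-1.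

Definition peaks := occ true false.
Definition valleys := occ false true.
Definition drises := occ true true.
Definition dfalls := occ false false.

Definition npaths (r n : nat) (Q : seq bool -> bool) : nat :=
  #|[set p : ((r.+1 * n).+1).-tuple bool | in_P r n p && Q p]|.

From mathcomp Require Import all_boot all_order all_algebra.
From mathcomp Require Import zify ring.
Set Implicit Arguments. Unset Strict Implicit. Unset Printing Implicit Defensive.
Import Order.TTheory GRing.Theory Num.Theory.

(* Cycle lemma.  A word s of P(n,r,1) ends at height 1, so the perturbed
   heights  |s| * h(m) - m  of its cyclic positions m are pairwise distinct, and
   for a marked position q (an occurrence of the pattern under study, or an
   up/down step) the number of marked positions on or below the axis in the
   rotation of s starting at q is the rank of q among the marked positions for
   this order.  Hence the rotations of s starting at its K marked positions
   realise every value of the statistic exactly once, and double counting the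
   pairs (word, marked position) shows that the statistic is equidistributed
   over its K values.  The number of words with given first and last letters
   and given number of peaks is a product of two binomial coefficients, which
   count the compositions of the up and of the down steps into their runs. *)

(** * Cyclic words *)

Definition cnth (s : seq bool) (i : nat) : bool := nth false s (i %% size s).

Lemma cnthDsize s i : cnth s (i + size s) = cnth s i.
Proof. by rewrite /cnth modnDr. Qed.

Lemma cnth_small s i : i < size s -> cnth s i = nth false s i.
Proof. by move=> lt_i; rewrite /cnth modn_small. Qed.

Lemma cnth_rot s q i : q <= size s -> cnth (rot q s) i = cnth s (q + i).
Proof.
move=> le_q; have [s0|s_gt0] := posnP (size s).
  by move: le_q; rewrite s0 leqn0 => /eqP->; rewrite rot0 add0n.
have lt_i : i %% size s < size s by rewrite ltn_mod.
rewrite /cnth size_rot /rot nth_cat size_drop; case: ltnP => hi.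
  by rewrite nth_drop; congr nth; rewrite -modnDmr [RHS]modn_small //; lia.
rewrite nth_take; last by lia.
congr nth; rewrite -modnDmr.
have -> : q + i %% size s = (q + i %% size s - size s) + size s by lia.
by rewrite modnDr [RHS]modn_small //; lia.
Qed.

(* The letters at cyclic positions [m - 1] and [m]; [(m + size s).-1] avoids
   truncated subtraction at [m = 0]. *)
Definition cevent (e : rel bool) (s : seq bool) (m : nat) : bool :=
  e (cnth s (m + size s).-1) (cnth s m).

Definition ccount (e : rel bool) (s : seq bool) : nat :=
  count (cevent e s) (iota 0 (size s)).

Lemma ceventDsize e s m : cevent e s (size s + m) = cevent e s m.
Proof.
rewrite /cevent [size s + m]addnC cnthDsize; have [->|s_gt0] := posnP (size s).
  by rewrite !addn0.
have -> : (m + size s + size s).-1 = (m + size s).-1 + size s by lia.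
by rewrite cnthDsize.
Qed.

Lemma cevent_rot e s q m : q <= size s -> cevent e (rot q s) m = cevent e s (q + m).
Proof.
move=> le_q; rewrite /cevent size_rot !cnth_rot //.
have [s0|s_gt0] := posnP (size s); first by move: le_q; rewrite s0 leqn0 => /eqP->.
by congr (e (cnth s _) _); lia.
Qed.

Lemma count_iota_shift (a : pred nat) L q : (forall m, a (L + m) = a m) ->
  count a (iota q L) = count a (iota 0 L).
Proof.
move=> a_per; elim: q => // q <-; case: L a_per => // L a_per.
rewrite -[L.+1]addn1 iotaD count_cat /= addn0.
by rewrite addn1 /= addSnnS [q + _]addnC a_per addnC.
Qed.

Lemma ccount_rot e s q : ccount e (rot q s) = ccount e s.
Proof.
have [le_q|/ltnW/rot_oversize-> //] := leqP q (size s).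
rewrite /ccount size_rot (eq_count (fun m => cevent_rot e m le_q)).
rewrite -(count_map (addn q) (cevent e s)) -iotaDl addn0.
by apply: count_iota_shift => m; rewrite ceventDsize.
Qed.

(** * The cycle lemma *)

Local Open Scope ring_scope.

Section CyclicHeight.

Variable w : bool -> int.

Definition cheight (s : seq bool) (m : nat) : int := \sum_(i < m) w (cnth s i).

(* Scaling by [size s] and subtracting [m] breaks the ties between positions
   of equal height without reordering positions of different heights. *)
Definition pheight (s : seq bool) (m : nat) : int := cheight s m * (size s)%:Z - m%:Z.

Definition crank (e : rel bool) (s : seq bool) (q : nat) : nat :=
  count (fun p => cevent e s p && (pheight s p < pheight s q)) (iota 0 (size s)).

Lemma cheightD s a b :
  cheight s (a + b) = cheight s a + \sum_(i < b) w (cnth s (a + i)).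
Proof. by rewrite /cheight big_split_ord. Qed.

Lemma cheight_rot s q m : (q <= size s)%N ->
  cheight (rot q s) m = cheight s (q + m) - cheight s q.
Proof.
move=> le_q; rewrite cheightD addrAC subrr add0r /cheight.
by apply: eq_bigr => i _; rewrite cnth_rot.
Qed.

Lemma cheightDsize s m : cheight s (size s + m) = cheight s (size s) + cheight s m.
Proof.
by rewrite cheightD; congr (_ + _); apply: eq_bigr => i _; rewrite addnC cnthDsize.
Qed.

Lemma pheightDsize s m : cheight s (size s) = 1 -> pheight s (size s + m) = pheight s m.
Proof. by move=> h1; rewrite /pheight cheightDsize h1 PoszD; ring. Qed.

Lemma pheight_inj s p q : (p < size s)%N -> (q < size s)%N ->
  pheight s p = pheight s q -> p = q.
Proof.
rewrite /pheight; move: (cheight s p) (cheight s q) (size s) => x y L lt_p lt_q.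
have [lt_xy|lt_yx|->] := ltrgtP x y; last lia.
- have : (x + 1) * L%:Z <= y * L%:Z by apply: ler_wpM2r; lia.
  lia.
- have : (y + 1) * L%:Z <= x * L%:Z by apply: ler_wpM2r; lia.
  lia.
Qed.

Lemma le0_cheightB s q v : (0 < v < size s)%N ->
  (cheight s (q + v) - cheight s q <= 0) = (pheight s (q + v) < pheight s q).
Proof.
move=> /andP[v_gt0 lt_v]; rewrite /pheight.
move: (cheight s (q + v)) (cheight s q) => x y.
by apply/idP/idP => h; nia.
Qed.

(* In the rotation starting at [q], an event lies on or below the axis iff its
   perturbed height in [s] is smaller than that of [q]. *)
Lemma count_le0_rot e s q : cheight s (size s) = 1 -> (q < size s)%N ->
  count (fun v => cevent e (rot q s) v && (cheight (rot q s) v <= 0))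
        (iota 1 (size s).-1)
  = crank e s q.
Proof.
move=> h1 lt_q.
pose a m := cevent e s m && (pheight s m < pheight s q).
rewrite (@eq_in_count _ _ (fun v => a (q + v)%N)); last first.
  move=> v; rewrite mem_iota => /andP[v_ge1 lt_v].
  by rewrite /a cevent_rot ?cheight_rot ?le0_cheightB //; lia.
rewrite -(count_map (addn q) a) -iotaDl.
have -> : count a (iota (q + 1) (size s).-1) = count a (iota q (size s)).
  rewrite -[in RHS](prednK (leq_ltn_trans (leq0n q) lt_q)) /=.
  by rewrite {2}/a ltxx andbF add0n addn1.
by rewrite /crank count_iota_shift // => m; rewrite /a ceventDsize pheightDsize.
Qed.

Lemma count_predU1 (T : eqType) (a : pred T) x (t : seq T) :
  ~~ a x -> x \in t -> uniq t -> count (predU a (pred1 x)) t = (count a t).+1.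
Proof.
move=> Nax xt ut; have := count_predUI a (pred1 x) t.
rewrite (count_uniq_mem x ut) xt (@eq_count _ (predI a (pred1 x)) pred0) ?count_pred0 ?addn0 ?addn1 //.
by move=> y /=; case: (eqVneq y x) => [->|]; rewrite ?(negbTE Nax) ?andbF.
Qed.

Lemma crank_lt e s p q : cevent e s p -> (p < size s)%N ->
  pheight s p < pheight s q -> (crank e s p < crank e s q)%N.
Proof.
move=> ep lt_p lt_pq; rewrite /crank -(count_predU1 _ (x := p)) ?mem_iota ?iota_uniq ?ltxx ?andbF //.
apply: sub_count => x /= /orP[/andP[ex lt_x]|/eqP->]; rewrite ?ep ?lt_pq //.
by rewrite ex (lt_trans lt_x lt_pq).
Qed.

Lemma crank_lt_ccount e s q : cevent e s q -> (q < size s)%N -> (crank e s q < ccount e s)%N.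
Proof.
move=> ev_q lt_q; rewrite /crank /ccount -(count_predU1 _ (x := q)) ?mem_iota ?iota_uniq ?ltxx ?andbF //.
by apply: sub_count => x /= /orP[/andP[]|/eqP->].
Qed.

(* Since [pheight s] is injective, the ranks of the events are exactly
   [0, ..., ccount e s - 1]. *)
Lemma count_crank_eq e s j : (j < ccount e s)%N ->
  count (fun q => cevent e s q && (crank e s q == j)) (iota 0 (size s)) = 1%N.
Proof.
move=> lt_j; set ev := filter (cevent e s) (iota 0 (size s)).
have evP x : x \in ev -> cevent e s x /\ (x < size s)%N.
  by rewrite mem_filter mem_iota => /andP[-> /andP[_ ->]].
have -> : count (fun q => cevent e s q && (crank e s q == j)) (iota 0 (size s))
          = count (pred1 j) (map (crank e s) ev).
  by rewrite count_map count_filter; apply: eq_count => x /=; rewrite andbC.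
have uniq_ranks : uniq (map (crank e s) ev).
  rewrite map_inj_in_uniq ?filter_uniq ?iota_uniq // => x y /evP[ex lt_x] /evP[ey lt_y] exy.
  have [hxy|hxy|] := ltgtP (pheight s x) (pheight s y); last exact: pheight_inj.
  - by have := crank_lt ex lt_x hxy; rewrite exy ltnn.
  - by have := crank_lt ey lt_y hxy; rewrite exy ltnn.
have sub_ranks : {subset map (crank e s) ev <= iota 0 (ccount e s)}.
  move=> y /mapP[x /evP[ex lt_x] ->]; rewrite mem_iota add0n.
  exact: crank_lt_ccount.
have size_ranks : (size (iota 0 (ccount e s)) <= size (map (crank e s) ev))%N.
  by rewrite size_map size_iota size_filter.
have [_ /uniq_perm perm_ranks] := uniq_min_size uniq_ranks sub_ranks size_ranks.
rewrite (permP (perm_ranks uniq_ranks (iota_uniq _ _))).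
by rewrite count_uniq_mem ?iota_uniq // mem_iota add0n lt_j.
Qed.

End CyclicHeight.

Local Close Scope ring_scope.

(** * Double counting over rotations *)

Lemma sum_nat_of_bool (I : Type) (r : seq I) (a : pred I) :
  \sum_(i <- r) (a i : nat) = count a r.
Proof. by rewrite -sum1_count [RHS]big_mkcond. Qed.

Lemma card_set_sum (T : finType) (a : pred T) : #|[set x | a x]| = \sum_x (a x : nat).
Proof. by rewrite -sum1_card [LHS]big_mkcond; apply: eq_bigr => x _; rewrite inE. Qed.

Lemma sum_ord_nat_of_bool L (a : pred nat) :
  \sum_(i < L) (a i : nat) = count a (iota 0 L).
Proof. by rewrite -(big_mkord xpredT (fun i => (a i : nat))) /index_iota subn0 sum_nat_of_bool. Qed.

Lemma rot_back (s : seq bool) q N : size s = N -> q < N -> rot ((N - q) %% N) (rot q s) = s.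
Proof.
move=> <- lt_q; have [->|q_gt0] := posnP q; first by rewrite subn0 modnn !rot0.
by rewrite modn_small; [have := rotK q s; rewrite /rotr size_rot | lia].
Qed.

Lemma cevent_rot_back e s q N : size s = N -> q < N ->
  cevent e (rot q s) ((N - q) %% N) = cevent e s 0.
Proof.
move=> <- lt_q; rewrite cevent_rot; last exact: ltnW.
have [->|q_gt0] := posnP q; first by rewrite subn0 modnn.
rewrite modn_small; last lia.
by rewrite subnKC; [rewrite -[size s]addn0 ceventDsize | exact: ltnW].
Qed.

(* [(s, q)] is sent to the rotation [s'] of [s] starting at [q] together with
   the position of the start of [s] inside [s']. *)
Definition rot_pair L (p : L.+1.-tuple bool * 'I_L.+1) : L.+1.-tuple bool * 'I_L.+1 :=
  ([tuple of rot p.2 p.1], inord ((L.+1 - p.2) %% L.+1)).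

Lemma rot_pairK L : involutive (@rot_pair L).
Proof.
case=> s q; have lt_q := ltn_ord q; rewrite /rot_pair /=; congr pair.
  by apply: val_inj; rewrite /= inordK ?ltn_mod // (rot_back (size_tuple s)).
apply: val_inj; rewrite /= inordK ?ltn_mod //.
have [q0|q_gt0] := posnP (nat_of_ord q); first by rewrite q0 subn0 modnn inordK // subn0 modnn.
rewrite (@modn_small (L.+1 - q)); last by lia.
by rewrite inordK; [rewrite modn_small; lia | lia].
Qed.

Section DoubleCount.

Variables (w : bool -> int) (L : nat) (e : rel bool) (A : pred (seq bool)).
Variables (st : seq bool -> nat) (c K j : nat).

Hypothesis A_rot : forall s q, A (rot q s) = A s.
Hypothesis A_ccount : forall s, size s = L.+1 -> A s -> ccount e s = K.
Hypothesis st_rot : forall s q, size s = L.+1 -> A s -> q < L.+1 -> cevent e s q ->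
  st (rot q s) = crank w e s q + c.
Hypothesis j_range : c <= j < K + c.

Let marked (s : L.+1.-tuple bool) (q : 'I_L.+1) : nat :=
  [&& A s, cevent e s 0, cevent e s q & st (rot q s) == j].

Lemma sum_marked_by_word :
  \sum_s \sum_q marked s q = #|[set s : L.+1.-tuple bool | A s && cevent e s 0]|.
Proof.
rewrite card_set_sum; apply: eq_bigr => s _; have size_s := size_tuple s.
have [/andP[As e0]|/negbTE nAe] := boolP (A s && cevent e s 0); last first.
  by apply: big1 => q _; rewrite /marked andbA nAe.
rewrite (eq_bigr (fun q : 'I_L.+1 => (cevent e s q && (crank w e s q == j - c)) : nat)).
  rewrite (sum_ord_nat_of_bool _ (fun q => cevent e s q && (crank w e s q == j - c))).
  have := @count_crank_eq w e s (j - c); rewrite size_s => ->//.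
  by rewrite A_ccount //; lia.
move=> q _; rewrite /marked As e0 /=; case ev_q: (cevent e s q) => //=.
by rewrite st_rot //; apply/eqP/eqP; lia.
Qed.

Lemma sum_marked_by_rotation :
  \sum_s \sum_q marked s q
  = K * #|[set s : L.+1.-tuple bool | [&& A s, cevent e s 0 & st s == j]]|.
Proof.
rewrite pair_big /= (reindex_inj (inv_inj (@rot_pairK L))) /=.
rewrite -(pair_big xpredT xpredT (fun s q => marked (rot_pair (s, q)).1 (rot_pair (s, q)).2)) /=.
rewrite card_set_sum big_distrr /=; apply: eq_bigr => s _; have size_s := size_tuple s.
rewrite (eq_bigr (fun q : 'I_L.+1 => ([&& A s, cevent e s 0 & st s == j] && cevent e s q) : nat)).
  have [/and3P[As e0 _]|_] := boolP [&& A s, cevent e s 0 & st s == j].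
    by rewrite muln1 sum_ord_nat_of_bool -(A_ccount size_s As) /ccount size_s.
  by rewrite muln0 big1.
move=> q _; have lt_q := ltn_ord q.
rewrite /marked /rot_pair /= inordK ?ltn_mod // (rot_back size_s lt_q) A_rot.
rewrite (cevent_rot_back _ size_s lt_q) cevent_rot ?addn0; last by rewrite size_s ltnW.
by case: (A s) (cevent e s 0) (cevent e s q) (st s == j) => [] [] [] [].
Qed.

Lemma card_rank : K * #|[set s : L.+1.-tuple bool | [&& A s, cevent e s 0 & st s == j]]|
  = #|[set s : L.+1.-tuple bool | A s && cevent e s 0]|.
Proof. by rewrite -sum_marked_by_rotation sum_marked_by_word. Qed.

End DoubleCount.

Definition step_rise (r : nat) (b : bool) : int := if b then 1%R else (- r%:Z)%R.

Definition ev_pair (a b : bool) : rel bool := fun x y => (x == a) && (y == b).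
Definition ev_step (a : bool) : rel bool := fun _ y => y == a.

Lemma ht_cheight r s i : i <= size s -> ht r s i = cheight (step_rise r) s i.
Proof.
elim: i => [|i IH] le_i; first by rewrite /ht /cheight big_ord0 take0 /= muln0 subrr.
rewrite /cheight big_ord_recr /= -/(cheight (step_rise r) s i) -IH; last exact: ltnW.
rewrite /ht (take_nth false le_i) -cats1 !count_cat cnth_small //.
case: (nth false s i) => /=; rewrite ?addn0 ?addn1 ?muln0 ?mulnS ?addn0.
  by rewrite intS; ring.
by rewrite PoszD; ring.
Qed.

Lemma in_P_cheight r n s : in_P r n s -> cheight (step_rise r) s (size s) = 1%R.
Proof.
case/and3P => /eqP size_s /eqP ups /eqP downs.
by rewrite -ht_cheight // /ht take_size ups downs -addn1 PoszD addrAC subrr add0r.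
Qed.

Lemma in_P_rot r n q s : in_P r n (rot q s) = in_P r n s.
Proof.
have rot_s : perm_eq (rot q s) s by rewrite perm_rot.
by rewrite /in_P size_rot !(permP rot_s).
Qed.

Lemma cevent_pair0 a b s : cevent (ev_pair a b) s 0 = (last_step s == a) && (first_step s == b).
Proof.
rewrite /cevent /ev_pair /cnth /last_step /first_step add0n.
have [->|s_gt0] := posnP (size s); first by rewrite !modn0.
by rewrite mod0n modn_small // prednK.
Qed.

Lemma cevent_step0 a s : cevent (ev_step a) s 0 = (first_step s == a).
Proof. by rewrite /cevent /ev_step /cnth /first_step; case: (size s) => [|m]; rewrite ?modn0 ?mod0n. Qed.

Lemma cevent_pairS a b s i : i.+1 < size s ->
  cevent (ev_pair a b) s i.+1 = (nth false s i == a) && (nth false s i.+1 == b).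
Proof.
move=> lt_i; rewrite /cevent /ev_pair (cnth_small lt_i) addSn /= cnthDsize cnth_small //.
exact: ltnW.
Qed.

Lemma iota1 m : iota 1 m = map S (iota 0 m).
Proof. exact: (iotaDl 1 0 m). Qed.

Lemma occ_ccount a b s : 0 < size s ->
  occ a b s + cevent (ev_pair a b) s 0 = ccount (ev_pair a b) s.
Proof.
move=> s_gt0; rewrite /ccount /occ -(prednK s_gt0) /= iota1 count_map addnC.
congr addn; apply: eq_in_count => i; rewrite mem_iota add0n => /andP[_ lt_i] /=.
by rewrite cevent_pairS //; lia.
Qed.

Lemma occ_ccount_first a b s : 0 < size s -> first_step s != b ->
  occ a b s = ccount (ev_pair a b) s.
Proof. by move=> s_gt0 /negbTE fb; rewrite -occ_ccount // cevent_pair0 fb andbF addn0. Qed.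

Lemma occ_low_rot r n a b s q : in_P r n s -> q < size s ->
  occ_low r a b (rot q s) = crank (step_rise r) (ev_pair a b) s q.
Proof.
move=> Ps lt_q; rewrite -count_le0_rot ?(in_P_cheight Ps) // /occ_low size_rot.
rewrite iota1 count_map; apply: eq_in_count => i.
rewrite mem_iota add0n => /andP[_ lt_i] /=.
by rewrite cevent_pairS ?ht_cheight ?size_rot ?andbA //; lia.
Qed.

Lemma steps_low_rot r n a s q : in_P r n s -> q < size s -> cevent (ev_step a) s q ->
  steps_low r a (rot q s) = (crank (step_rise r) (ev_step a) s q).+1.
Proof.
move=> Ps lt_q ev_q; rewrite -count_le0_rot ?(in_P_cheight Ps) // /steps_low size_rot.
have size_s := lt_q; case def_L: (size s) size_s => [//|L] _ /=.
rewrite -[RHS]addn1 addnC; congr addn.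
  apply: eq_in_count => i; rewrite mem_iota => /andP[_ lt_i] /=.
  rewrite ht_cheight ?size_rot ?def_L; last lia.
  by rewrite /cevent /ev_step cnth_small // size_rot def_L; lia.
rewrite ht_cheight ?size_rot // /cheight big_ord0 lexx andbT.
rewrite -cnth_small ?size_rot ?def_L // cnth_rot ?addn0; last exact: ltnW.
by move: ev_q; rewrite /cevent /ev_step => ->.
Qed.

Lemma ccount_step a s : ccount (ev_step a) s = count_mem a s.
Proof.
rewrite /ccount -[in RHS](mkseq_nth false s) /mkseq count_map.
apply: eq_in_count => i; rewrite mem_iota add0n => /andP[_ lt_i].
by rewrite /= /cevent /ev_step cnth_small.
Qed.

Lemma eq_npaths r n (P Q : pred (seq bool)) :
  (forall s, in_P r n s -> P s = Q s) -> npaths r n P = npaths r n Q.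
Proof.
by move=> PQ; apply: eq_card => s; rewrite !inE; case Ps: (in_P r n s); rewrite //= PQ.
Qed.

Lemma npaths_by_last r n (P : pred (seq bool)) :
  npaths r n P = npaths r n (fun s => P s && (last_step s == true))
                 + npaths r n (fun s => P s && (last_step s == false)).
Proof.
rewrite /npaths !card_set_sum -big_split; apply: eq_bigr => s _.
by case: (in_P r n s) (P s) (last_step s) => [] [] [].
Qed.

Lemma npaths_rank r n e (Q : pred (seq bool)) (st : seq bool -> nat) c K j :
  (forall s q, Q (rot q s) = Q s) ->
  (forall s, in_P r n s -> Q s -> ccount e s = K) ->
  (forall s q, in_P r n s -> q < size s -> cevent e s q ->
     st (rot q s) = crank (step_rise r) e s q + c) ->
  c <= j < K + c ->
  K * npaths r n (fun s => [&& Q s, cevent e s 0 & st s == j])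
  = npaths r n (fun s => Q s && cevent e s 0).
Proof.
move=> Q_rot Q_ccount st_rot j_range.
pose A s := in_P r n s && Q s.
have A_rot s q : A (rot q s) = A s by rewrite /A in_P_rot Q_rot.
have A_ccount s : size s = (r.+1 * n).+1 -> A s -> ccount e s = K.
  by rewrite /A => _ /andP[]; exact: Q_ccount.
have A_st s q : size s = (r.+1 * n).+1 -> A s -> q < (r.+1 * n).+1 -> cevent e s q ->
    st (rot q s) = crank (step_rise r) e s q + c.
  by rewrite /A => size_s /andP[Ps _]; rewrite -size_s; exact: st_rot.
have set_A (P : pred (seq bool)) :
    [set s : ((r.+1 * n).+1).-tuple bool | A s & P s]
    = [set s : ((r.+1 * n).+1).-tuple bool | in_P r n s & Q s && P s].
  by apply/setP => s; rewrite !inE andbA.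
rewrite /npaths -(set_A (fun s => cevent e s 0 && (st s == j))) -(set_A (cevent e ^~ 0)).
exact: card_rank A_rot A_ccount A_st j_range.
Qed.

Lemma npaths_occ_low r n a b K j : j < K ->
  K * npaths r n (fun s => [&& occ a b s == K.-1, first_step s == b,
                              last_step s == a & occ_low r a b s == j])
  = npaths r n (fun s => [&& occ a b s == K.-1, first_step s == b & last_step s == a]).
Proof.
move=> lt_j; have K_gt0 : 0 < K by lia.
have occ_first_last s : in_P r n s ->
    (occ a b s == K.-1) && (first_step s == b) && (last_step s == a)
    = (ccount (ev_pair a b) s == K) && cevent (ev_pair a b) s 0.
  case/and3P=> /eqP size_s _ _; rewrite -occ_ccount ?size_s // cevent_pair0.
  case: (first_step s == b); case: (last_step s == a); rewrite /= ?andbF ?andbT //.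
  by rewrite addn1 -(prednK K_gt0) eqSS.
under eq_npaths => s Ps do rewrite !andbA (occ_first_last _ Ps) -andbA.
under [RHS]eq_npaths => s Ps do rewrite !andbA (occ_first_last _ Ps).
apply: (npaths_rank (c := 0)) => [s q|s _ /eqP //|s q Ps lt_q _|].
- by rewrite ccount_rot.
- by rewrite (occ_low_rot a b Ps lt_q) addn0.
- by rewrite addn0.
Qed.

Lemma npaths_steps_low r n a (Q : pred (seq bool)) K j :
  (forall s q, Q (rot q s) = Q s) -> (forall s, in_P r n s -> count_mem a s = K) ->
  0 < j <= K ->
  K * npaths r n (fun s => [&& Q s, first_step s == a & steps_low r a s == j])
  = npaths r n (fun s => Q s && (first_step s == a)).
Proof.
move=> Q_rot count_a j_range.
have first_ev s : (first_step s == a) = cevent (ev_step a) s 0 by rewrite cevent_step0.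
under eq_npaths => s _ do rewrite first_ev.
under [RHS]eq_npaths => s _ do rewrite first_ev.
apply: (npaths_rank (c := 1)) => [//|s Ps _|s q Ps lt_q ev_q|].
- by rewrite ccount_step count_a.
- by rewrite (steps_low_rot Ps lt_q ev_q) addn1.
- by rewrite addn1.
Qed.

(** * Words counted by peaks *)

Lemma cons_inj (T : Type) (x : T) : injective (cons x).
Proof. by move=> s t []. Qed.

Fixpoint bitseqs (m : nat) : seq (seq bool) :=
  if m is m'.+1 then [seq true :: w | w <- bitseqs m'] ++ [seq false :: w | w <- bitseqs m']
  else [:: [::]].

Lemma mem_bitseqs m s : (s \in bitseqs m) = (size s == m).
Proof.
elim: m s => [|m IH] [|x s] //=; rewrite mem_cat.
  by apply/negbTE/negP => /orP[] /mapP[].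
have mem_cons y : (x :: s \in [seq y :: w | w <- bitseqs m]) = (x == y) && (s \in bitseqs m).
  have [->|ne_xy] := eqVneq x y; first exact/mem_map/cons_inj.
  by apply/negbTE/negP => /mapP[w _ [exy _]]; rewrite exy eqxx in ne_xy.
by rewrite !mem_cons IH eqSS; case: (x); rewrite /= ?orbF.
Qed.

Lemma uniq_bitseqs m : uniq (bitseqs m).
Proof.
elim: m => //= m IH; rewrite cat_uniq !map_inj_uniq ?IH //; try exact: cons_inj.
by rewrite andbT; apply/hasPn => _ /mapP[w _ ->]; apply/negP => /mapP[v _ []].
Qed.

Lemma card_tuple_bitseqs m (P : pred (seq bool)) :
  #|[set t : m.-tuple bool | P t]| = count P (bitseqs m).
Proof.
have perm_enum : perm_eq (bitseqs m) (map val (enum {: m.-tuple bool})).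
  apply: uniq_perm; first exact: uniq_bitseqs.
    by rewrite map_inj_uniq ?enum_uniq //; exact: val_inj.
  move=> s; rewrite mem_bitseqs; apply/idP/mapP => [size_s|[t _ ->]]; last by rewrite size_tuple.
  by exists (Tuple size_s); rewrite ?mem_enum.
rewrite card_set_sum -sum_nat_of_bool (perm_big _ perm_enum) big_map big_enum.
by apply: eq_bigl => t; rewrite inE.
Qed.

Lemma occ_cons a b x y s :
  occ a b [:: x, y & s] = ((x == a) && (y == b)) + occ a b (y :: s).
Proof. by rewrite /occ /= iota1 count_map. Qed.

(* Number of compositions of [a] into [p] positive parts. *)
Definition ncomp (a p : nat) : nat :=
  if p is p'.+1 then (if a is a'.+1 then 'C(a', p') else 0) else a == 0.

Lemma ncompSS a p : ncomp a.+1 p.+1 = 'C(a, p).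
Proof. by []. Qed.

Lemma ncompS a p : ncomp a.+1 p.+1 = ncomp a p.+1 + ncomp a p.
Proof. by case: a p => [|a] [|p]; rewrite /= ?bin0n ?bin0 ?binS. Qed.

(* A word with [p] factors [10] consists of alternating maximal runs; [x], [y]
   and [p] fix the numbers of runs of ones and of zeros, and the run lengths
   form a composition of [a], resp. [b]. *)
Definition npeak_words (x y : bool) (a b p : nat) : nat :=
  match x, y with
  | true, false => ncomp a p * ncomp b p
  | true, true => ncomp a p.+1 * ncomp b p
  | false, true => ncomp a p.+1 * ncomp b p.+1
  | false, false => ncomp a p * ncomp b p.+1
  end.

Arguments ncomp : simpl never.

Definition count_peak_words m x y a p : nat :=
  count (fun w => [&& count id (x :: w) == a, last x w == y & peaks (x :: w) == p])
        (bitseqs m).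

Lemma count_peak_words_gt m x y a p : m.+1 < a -> count_peak_words m x y a p = 0.
Proof.
move=> lt_m; apply/eqP; rewrite -leqn0 leqNgt -has_count; apply/hasPn => w.
rewrite mem_bitseqs => /eqP size_w; apply/negP => /and3P[/eqP count_w _ _].
by have := count_size id (x :: w); rewrite count_w /= size_w; lia.
Qed.

Lemma count_peak_words_false m y a p :
  count_peak_words m.+1 false y a p = count_peak_words m true y a p + count_peak_words m false y a p.
Proof.
by rewrite /count_peak_words /= count_cat !count_map; congr addn;
  apply: eq_count => w /=; rewrite /peaks occ_cons.
Qed.

Lemma count_peak_words_true0 m y p : count_peak_words m true y 0 p = 0.
Proof. by apply/eqP; rewrite -leqn0 leqNgt -has_count; apply/hasPn. Qed.

Lemma count_peak_words_true m y a p : count_peak_words m.+1 true y a.+1 p =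
  count_peak_words m true y a p + (if p is p'.+1 then count_peak_words m false y a p' else 0).
Proof.
rewrite /count_peak_words /= count_cat !count_map; congr addn.
  by apply: eq_count => w /=; rewrite /peaks occ_cons.
case: p => [|p].
  apply/eqP; rewrite -leqn0 leqNgt -has_count; apply/hasPn => w _ /=.
  by rewrite /peaks occ_cons /= add1n !andbF.
by apply: eq_count => w /=; rewrite /peaks occ_cons /= !add1n !eqSS.
Qed.

Lemma count_peak_wordsE m x y a b p : a + b = m.+1 -> count_peak_words m x y a p = npeak_words x y a b p.
Proof.
elim: m x y a b p => [|m IH] x y a b p sum_ab.
  have [[-> ->]|[-> ->]] : a = 1 /\ b = 0 \/ a = 0 /\ b = 1 by lia.
    by case: x; case: y; case: p => [|[|p]]; rewrite /count_peak_words /= /ncomp ?bin0n.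
  by case: x; case: y; case: p => [|[|p]]; rewrite /count_peak_words /= /ncomp ?bin0n.
case: x.
  case: a sum_ab => [|a] sum_ab.
    rewrite count_peak_words_true0; case: y; case: p => [|p] //=; rewrite /npeak_words /ncomp //=.
    by case: b sum_ab.
  rewrite count_peak_words_true (IH true y a b p); last lia.
  have ncomp00 : ncomp a 0 * ncomp b 0 = 0 by rewrite /ncomp; case: a b sum_ab => [|?] [|?].
  case: p => [|p].
    by case: y; rewrite /npeak_words ?ncompS /= ?addn0 ?mul0n // mulnDl ncomp00 addn0.
  rewrite (IH false y a b p); last lia.
  by case: y; rewrite /npeak_words ?ncompS; ring.
case: b sum_ab => [|b] sum_ab.
  rewrite count_peak_words_false !count_peak_words_gt; try lia.
  by case: y; rewrite /npeak_words /ncomp /= ?muln0.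
rewrite count_peak_words_false (IH true y a b p) ?(IH false y a b p); try lia.
by case: y; rewrite /npeak_words ncompS; ring.
Qed.

Lemma in_P_cons r n x w : size w = r.+1 * n ->
  in_P r n (x :: w) = (count id (x :: w) == (r * n).+1).
Proof.
move=> size_w; rewrite /in_P /= size_w eqxx /=.
have := count_predC id (x :: w); rewrite (@eq_count _ (predC id) negb) //=.
by case: eqP => //= ->; rewrite size_w => ?; apply/eqP; lia.
Qed.

Lemma last_step_cons x w : last_step (x :: w) = last x w.
Proof. by rewrite /last_step /= -[size w]/((size (x :: w)).-1) nth_last. Qed.

Lemma npaths_first_last_peaks r n x y p :
  npaths r n (fun s => [&& first_step s == x, last_step s == y & peaks s == p])
  = npeak_words x y (r * n).+1 n p.
Proof.
rewrite -(@count_peak_wordsE (r.+1 * n)); last by rewrite mulSn; lia.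
rewrite /npaths (card_tuple_bitseqs _ (fun s => in_P r n s &&
  [&& first_step s == x, last_step s == y & peaks s == p])) /= count_cat !count_map.
have count_first x' : count (preim (cons x') (fun s => in_P r n s &&
      [&& first_step s == x, last_step s == y & peaks s == p])) (bitseqs (r.+1 * n))
    = if x' == x then count_peak_words (r.+1 * n) x y (r * n).+1 p else 0.
  have [->|ne_x] := eqVneq x' x; last first.
    by apply/eqP; rewrite -leqn0 leqNgt -has_count; apply/hasPn => w _ /=; rewrite (negbTE ne_x) andbF.
  apply: eq_in_count => w; rewrite mem_bitseqs => /eqP size_w /=.
  by rewrite in_P_cons // last_step_cons eqxx.
by rewrite !count_first; case: (x); rewrite ?addn0.
Qed.

Lemma peaks_valleys s : 0 < size s ->
  peaks s + last_step s = valleys s + first_step s.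
Proof.
case: s => [|x w] // _; rewrite last_step_cons /first_step /= /peaks /valleys.
elim: w x => [|y w IH] x; first by case: x.
by rewrite !occ_cons /=; move: (IH y); case: x; case: y => /=; lia.
Qed.

Lemma drises_peaks s : 0 < size s -> drises s + peaks s + last_step s = count id s.
Proof.
case: s => [|x w] // _; rewrite last_step_cons /drises /peaks.
elim: w x => [|y w IH] x; first by case: x.
by rewrite !occ_cons /=; move: (IH y) => /=; case: x; case: y => /=; lia.
Qed.

Lemma dfalls_valleys s : 0 < size s ->
  dfalls s + valleys s + ~~ last_step s = count negb s.
Proof.
case: s => [|x w] // _; rewrite last_step_cons /dfalls /valleys.
elim: w x => [|y w IH] x; first by case: x.
by rewrite !occ_cons /=; move: (IH y) => /=; case: x; case: y => /=; lia.
Qed.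

Local Open Scope ring_scope.

Lemma natr_eq_invM (R : numFieldType) (K x y : nat) :
  (0 < K)%N -> (K * x)%N = y -> x%:R = K%:R^-1 * y%:R :> R.
Proof. by move=> K_gt0 <-; rewrite natrM mulKf // pnatr_eq0 -lt0n. Qed.

Lemma npaths_peaks_low r n k j : (0 < n)%N -> (0 < k)%N -> (j <= k - 1)%N ->
  (npaths r n (fun s => [&& peaks s == (k - 1)%N, first_step s == false,
                           last_step s == true & occ_low r true false s == j]))%:R
  = k%:R^-1 * 'C(r * n, k - 1)%:R * 'C(n - 1, k - 1)%:R :> rat.
Proof.
move=> n_gt0 k_gt0 le_j; rewrite -mulrA -natrM; apply: natr_eq_invM => //.
rewrite !subn1 npaths_occ_low; last lia.
rewrite (@eq_npaths _ _ _ (fun s => [&& first_step s == false, last_step s == true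
                                        & peaks s == k.-1])); last by move=> s _; rewrite andbC -andbA.
rewrite npaths_first_last_peaks /npeak_words prednK //.
by case: k k_gt0 {le_j} => // k _; case: n n_gt0.
Qed.

Lemma npaths_valleys_low r n k j : (0 < n)%N -> (0 < k)%N -> (j <= k - 1)%N ->
  (npaths r n (fun s => [&& valleys s == (k - 1)%N, first_step s == true,
                           last_step s == false & occ_low r false true s == j]))%:R
  = k%:R^-1 * 'C(r * n, k - 1)%:R * 'C(n - 1, k - 1)%:R :> rat.
Proof.
move=> n_gt0 k_gt0 le_j; rewrite -mulrA -natrM; apply: natr_eq_invM => //.
rewrite !subn1 npaths_occ_low; last lia.
rewrite (@eq_npaths _ _ _ (fun s => [&& first_step s == true, last_step s == false
                                        & peaks s == k])); last first.
  move=> s /and3P[/eqP size_s _ _]; have := @peaks_valleys s.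
  rewrite size_s /peaks /valleys => /(_ isT).
  by case: (first_step s); case: (last_step s); rewrite /= ?andbT ?andbF // => pv; apply/eqP/eqP; lia.
rewrite npaths_first_last_peaks /npeak_words.
by case: k k_gt0 {le_j} => // k _; case: n n_gt0.
Qed.

Lemma npaths_drises_low r n k j : (0 < n)%N -> (0 < k)%N -> (j + k <= r * n)%N ->
  (npaths r n (fun s => [&& drises s == (r * n - k)%N, first_step s == true,
                           last_step s == true & occ_low r true true s == j]))%:R
  = ((r * n - k).+1)%:R^-1 * 'C(r * n, k)%:R * 'C(n - 1, k - 1)%:R :> rat.
Proof.
move=> n_gt0 k_gt0 le_jk; rewrite -mulrA -natrM; apply: natr_eq_invM => //.
rewrite npaths_occ_low; last lia.
rewrite (@eq_npaths _ _ _ (fun s => [&& first_step s == true, last_step s == true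
                                        & peaks s == k])); last first.
  move=> s /and3P[/eqP size_s /eqP ups _]; have := @drises_peaks s.
  rewrite size_s ups /drises /peaks => /(_ isT).
  by case: (first_step s); case: (last_step s); rewrite /= ?andbT ?andbF // => dp; apply/eqP/eqP; lia.
rewrite npaths_first_last_peaks /npeak_words !subn1.
by case: k k_gt0 {le_jk} => // k _; case: n n_gt0.
Qed.

Lemma npaths_dfalls_low r n k j : (0 < n)%N -> (0 < k)%N -> (j + k + 1 <= n)%N ->
  (npaths r n (fun s => [&& dfalls s == (n - k - 1)%N, first_step s == false,
                           last_step s == false & occ_low r false false s == j]))%:R
  = (n - k)%:R^-1 * 'C(r * n, k - 1)%:R * 'C(n - 1, k)%:R :> rat.
Proof.
move=> n_gt0 k_gt0 le_jk; rewrite -mulrA -natrM; apply: natr_eq_invM; first lia.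
rewrite subn1 npaths_occ_low; last lia.
rewrite (@eq_npaths _ _ _ (fun s => [&& first_step s == false, last_step s == false
                                        & peaks s == k])); last first.
  move=> s /and3P[/eqP size_s _ /eqP downs].
  have := @dfalls_valleys s; have := @peaks_valleys s.
  rewrite size_s downs /peaks /valleys /dfalls => /(_ isT) pv /(_ isT).
  by case: (first_step s) pv; case: (last_step s); rewrite /= ?andbT ?andbF // => pv df;
    apply/eqP/eqP; lia.
rewrite npaths_first_last_peaks /npeak_words !subn1.
by case: k k_gt0 {le_jk} => // k _; case: n n_gt0.
Qed.

Lemma npaths_up_steps_low r n k j : (0 < n)%N -> (0 < k)%N -> (1 <= j <= (r * n).+1)%N ->
  (npaths r n (fun s => [&& peaks s == k, first_step s == true
                           & steps_low r true s == j]))%:R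
  = ((r * n).+1)%:R^-1 * 'C((r * n).+1, k)%:R * 'C(n - 1, k - 1)%:R :> rat.
Proof.
move=> n_gt0 k_gt0 j_range; rewrite -mulrA -natrM; apply: natr_eq_invM => //.
have peaks_first s : in_P r n s -> first_step s == true ->
    peaks s = ccount (ev_pair true false) s.
  by case/and3P => /eqP size_s _ _ /eqP first_s; rewrite /peaks occ_ccount_first ?size_s ?first_s.
rewrite (@eq_npaths _ _ _ (fun s => [&& ccount (ev_pair true false) s == k,
                                        first_step s == true & steps_low r true s == j])); last first.
  by move=> s Ps; case first_s: (first_step s == true); rewrite /= ?andbF // peaks_first.
rewrite npaths_steps_low => [||s /and3P[_ /eqP ups _]|//]; first last.
- by rewrite -ups; apply: eq_count => -[].
- by move=> s q; rewrite ccount_rot.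
have count_last y : npaths r n (fun s => (ccount (ev_pair true false) s == k)
                                        && (first_step s == true) && (last_step s == y))
                   = npeak_words true y (r * n).+1 n k.
  rewrite -npaths_first_last_peaks; apply: eq_npaths => s Ps.
  case first_s: (first_step s == true); rewrite /= ?andbF // peaks_first //.
  by rewrite andbT andbC.
rewrite npaths_by_last !count_last /npeak_words.
case: k k_gt0 {peaks_first count_last} => // k _; case: n n_gt0 {j_range} => // n _.
by rewrite !ncompSS -mulnDl -binS !subn1.
Qed.

Lemma npaths_down_steps_low r n k j : (0 < n)%N -> (0 < k)%N -> (1 <= j <= n)%N ->
  (npaths r n (fun s => [&& valleys s == k, first_step s == false
                           & steps_low r false s == j]))%:R
  = n%:R^-1 * 'C(r * n, k - 1)%:R * 'C(n, k)%:R :> rat.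
Proof.
move=> n_gt0 k_gt0 j_range; rewrite -mulrA -natrM; apply: natr_eq_invM => //.
have valleys_first s : in_P r n s -> first_step s == false ->
    valleys s = ccount (ev_pair false true) s.
  by case/and3P => /eqP size_s _ _ /eqP first_s; rewrite /valleys occ_ccount_first ?size_s ?first_s.
rewrite (@eq_npaths _ _ _ (fun s => [&& ccount (ev_pair false true) s == k,
                                        first_step s == false & steps_low r false s == j])); last first.
  by move=> s Ps; case first_s: (first_step s == false); rewrite /= ?andbF // valleys_first.
rewrite npaths_steps_low => [||s /and3P[_ _ /eqP downs]|//]; first last.
- by rewrite -downs; apply: eq_count => -[].
- by move=> s q; rewrite ccount_rot.
have count_last y : npaths r n (fun s => (ccount (ev_pair false true) s == k)
                                        && (first_step s == false) && (last_step s == y))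
                   = npeak_words false y (r * n).+1 n (k - y).
  rewrite -npaths_first_last_peaks; apply: eq_npaths => s Ps.
  case first_s: (first_step s == false); rewrite /= ?andbF // -valleys_first //.
  have := @peaks_valleys s; case/and3P: Ps => /eqP-> _ _ /(_ isT).
  rewrite (eqP first_s) andbT andbC.
  by case: eqP => [->|] //= pv; apply/eqP/eqP; lia.
rewrite npaths_by_last !count_last /npeak_words subn0.
case: k k_gt0 {valleys_first count_last} => // k _; case: n n_gt0 {j_range} => // n _.
by rewrite subSS subn0 !ncompSS -mulnDr addnC -binS.
Qed.

Theorem theorem15 (r n k : nat) :
  (1 <= r)%N -> (1 <= n)%N -> (1 <= k)%N ->
  (* (1) *)
  (forall j : nat, (j <= k - 1)%N ->
     ((npaths r n (fun s => [&& peaks s == (k - 1)%N, first_step s == false,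
                               last_step s == true & occ_low r true false s == j]))%:R : rat)
     = k%:R^-1 * 'C(r * n, k - 1)%:R * 'C(n - 1, k - 1)%:R) /\
  (* (2) *)
  (forall j : nat, (j <= k - 1)%N ->
     ((npaths r n (fun s => [&& valleys s == (k - 1)%N, first_step s == true,
                               last_step s == false & occ_low r false true s == j]))%:R : rat)
     = k%:R^-1 * 'C(r * n, k - 1)%:R * 'C(n - 1, k - 1)%:R) /\
  (* (3) *)
  (forall j : nat, (j + k <= r * n)%N ->
     ((npaths r n (fun s => [&& drises s == (r * n - k)%N, first_step s == true,
                               last_step s == true & occ_low r true true s == j]))%:R : rat)
     = ((r * n - k).+1)%:R^-1 * 'C(r * n, k)%:R * 'C(n - 1, k - 1)%:R) /\
  (* (4) *)
  (forall j : nat, (j + k + 1 <= n)%N ->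
     ((npaths r n (fun s => [&& dfalls s == (n - k - 1)%N, first_step s == false,
                               last_step s == false & occ_low r false false s == j]))%:R : rat)
     = (n - k)%:R^-1 * 'C(r * n, k - 1)%:R * 'C(n - 1, k)%:R) /\
  (* (5) *)
  (forall j : nat, (1 <= j <= (r * n).+1)%N ->
     ((npaths r n (fun s => [&& peaks s == k, first_step s == true
                               & steps_low r true s == j]))%:R : rat)
     = ((r * n).+1)%:R^-1 * 'C((r * n).+1, k)%:R * 'C(n - 1, k - 1)%:R) /\
  (* (6) *)
  (forall j : nat, (1 <= j <= n)%N ->
     ((npaths r n (fun s => [&& valleys s == k, first_step s == false
                               & steps_low r false s == j]))%:R : rat)
     = n%:R^-1 * 'C(r * n, k - 1)%:R * 'C(n, k)%:R).
Proof.
move=> _ n_gt0 k_gt0.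
split; [|split; [|split; [|split; [|split]]]] => j.
- exact: npaths_peaks_low.
- exact: npaths_valleys_low.
- exact: npaths_drises_low.
- exact: npaths_dfalls_low.
- exact: npaths_up_steps_low.
- exact: npaths_down_steps_low.
Qed.
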